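(* Let $\mathcal{D}[t]\subset\mathcal{H}\subset\mathcal{D}^\times[t^\times]$ be a rigged Hilbert space, let $\{\xi_n\}$ be a Schauder basis for $\mathcal{D}[t]$, and let $\{\zeta_n\}\subset\mathcal{D}^\times$ be the sequence of coefficient functionals, i.e. the unique elements with $f=\sum_{n=1}^\infty\overline{\langle\zeta_n,f\rangle}\xi_n$ for all $f\in\mathcal{D}$. Then: (i) $\{\zeta_n\}$ is complete (its linear span is dense) in $\mathcal{D}^\times[\tau]$, where $\tau$ is any topology of the conjugate dual pair $(\mathcal{D}^\times,\mathcal{D})$ (i.e. compatible with this duality); if $\mathcal{D}[t]$ is reflexive, $\{\zeta_n\}$ is complete also with respect to $t^\times$. (ii) $\{\zeta_n\}$ is a basis for $\mathcal{D}^\times$ with respect to the weak topology: for every $\Psi\in\mathcal{D}^\times$, $$\langle\Psi,f\rangle=\sum_{k=1}^\infty\langle\Psi,\xi_k\rangle\langle\zeta_k,f\rangle,\quad\forall f\in\mathcal{D}.$$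
   Context: A rigged Hilbert space $\mathcal{D}[t]\subset\mathcal{H}\subset\mathcal{D}^\times[t^\times]$ consists of a dense subspace $\mathcal{D}$ of a Hilbert space $\mathcal{H}$ endowed with a locally convex topology $t$ finer than the topology induced by the Hilbert norm, and the space $\mathcal{D}^\times$ of all continuous conjugate-linear functionals on $\mathcal{D}[t]$, endowed with the strong dual topology $t^\times=\beta(\mathcal{D}^\times,\mathcal{D})$; $\mathcal{H}$ is identified with a subspace of $\mathcal{D}^\times$ and the duality form $\langle\Phi,f\rangle$ ($\Phi\in\mathcal{D}^\times$, $f\in\mathcal{D}$; the value of $\Phi$ at $f$) extends the inner product of $\mathcal{H}$. A Schauder basis of $\mathcal{D}[t]$ is a sequence $\{\xi_n\}$ such that every $\phi\in\mathcal{D}$ has a unique expansion $\phi=\sum c_n(\phi)\xi_n$ converging in $\mathcal{D}[t]$ with each coefficient functional $c_n$ $t$-continuous; then $c_n(f)=\overline{\langle\zeta_n,f\rangle}$ for a unique $\zeta_n\in\mathcal{D}^\times$. *)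

From HB Require Import structures.
From mathcomp Require Import all_boot all_order all_algebra.
From mathcomp Require Import all_classical all_reals all_analysis.
From mathcomp Require Import complex.
Import Order.TTheory GRing.Theory Num.Theory.
Import numFieldTopology.Exports numFieldNormedType.Exports.

Set Implicit Arguments.
Unset Strict Implicit.
Unset Printing Implicit Defensive.

Local Open Scope ring_scope.
Local Open Scope classical_set_scope.

(* The usual (norm) topology on the complex numbers R[i]. *)
#[non_forgetful_inheritance]
HB.instance Definition _ (R : realType) := PseudoPointedMetric.copy R[i] R[i]^o.

Section Rigged.
Variable R : realType.
Local Notation C := R[i].

Definition inner_product (H : normedModType C) (ip : H -> H -> C) :=
  [/\ forall a x y z, ip (a *: x + y) z = a * ip x z + ip y z,
      forall x y, ip y x = (ip x y)^*
    & forall x, ip x x = `|x| ^+ 2].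

(* Rigged Hilbert space D[t] ⊂ H ⊂ D^x: D is the locally convex space E,
   embedded in the Hilbert space H by the injective linear map j, which has
   dense range and is continuous (t finer than the Hilbert norm topology).
   H is identified with a subspace of D^x via h |-> (f |-> ip h (j f)). *)
Definition rigged_hilbert (E : tvsType C) (H : completeNormedModType C)
    (ip : H -> H -> C) (j : E -> H) :=
  [/\ inner_product ip,
      forall a x y, j (a *: x + y) = a *: j x + j y,
      injective j,
      continuous j
    & closure (range j) = setT].

Definition linear_fun (T : tvsType C) (L : T -> C) :=
  forall a x y, L (a *: x + y) = a * L x + L y.

Definition conj_linear_fun (E : tvsType C) (u : E -> C) :=
  forall a x y, u (a *: x + y) = a^* * u x + u y.

(* D^x : continuous conjugate-linear functionals on E; <Phi, f> = Phi f. *)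
Definition conj_dual (E : tvsType C) : set (E -> C) :=
  [set u | conj_linear_fun u /\ continuous u].

Definition schauder_basis (E : tvsType C) (xi : nat -> E) :=
  exists c : nat -> E -> C,
    (forall n, continuous (c n)) /\
    forall f : E,
      (\sum_(k < n) c k f *: xi k @[n --> \oo] --> f) /\
      forall d : nat -> C, (\sum_(k < n) d k *: xi k @[n --> \oo] --> f) ->
        d = (fun n => c n f).

Definition coef_functionals (E : tvsType C) (xi : nat -> E)
    (zeta : nat -> E -> C) :=
  (forall n, @conj_dual E (zeta n)) /\
  forall f : E, \sum_(k < n) (zeta k f)^* *: xi k @[n --> \oo] --> f.

(* A locally convex space T together with iota : T -> (E -> C) which is a
   linear bijection of T onto D^x: a model of D^x carrying some topology. *)
Definition dual_model (E T : tvsType C) (iota : T -> E -> C) :=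
  [/\ injective iota,
      forall a x y, iota (a *: x + y) = (fun f => a * iota x f + iota y f)
    & range iota = @conj_dual E].

Definition dual_pair_topology (E T : tvsType C) (iota : T -> E -> C) :=
  dual_model iota /\
  [set L : T -> C | linear_fun L /\ continuous L] =
  [set L | exists f : E, L = (fun x => iota x f)].

Definition tvs_bounded (T : tvsType C) (B : set T) :=
  forall U : set T, nbhs 0 U ->
    exists r : C, 0 < r /\
      forall mu : C, r <= `|mu| -> B `<=` [set mu *: u | u in U].

Definition strong_dual (E T : tvsType C) (iota : T -> E -> C) :=
  dual_model iota /\
  forall (x : T) (A : set T), nbhs x A <->
    exists B : set E, tvs_bounded B /\
      exists2 eps : C, 0 < eps &
        [set y | forall f, B f -> `|iota y f - iota x f| < eps] `<=` A.

(* Reflexivity of D[t] (relative to a model T of the strong dual):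
   the canonical map D -> (D^x[t^x])' is bijective, and t coincides with the
   strong topology beta(D, D^x) of uniform convergence on t^x-bounded sets. *)
Definition reflexive_via (E T : tvsType C) (iota : T -> E -> C) :=
  [/\ forall f g : E, (forall x, iota x f = iota x g) -> f = g,
      forall L : T -> C, linear_fun L -> continuous L ->
        exists f : E, forall x, L x = iota x f
    & forall (f : E) (A : set E), nbhs f A <->
        exists M : set T, tvs_bounded M /\
          exists2 eps : C, 0 < eps &
            [set g | forall x, M x -> `|iota x g - iota x f| < eps] `<=` A].

Definition reflexive_space (E : tvsType C) :=
  forall (T : tvsType C) (iota : T -> E -> C),
    strong_dual iota -> reflexive_via iota.

Definition lin_span (E : tvsType C) (zeta : nat -> E -> C) : set (E -> C) :=
  [set u | exists (n : nat) (c : nat -> C),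
           u = (fun f => \sum_(k < n) c k * zeta k f)].

End Rigged.
Arguments conj_dual {R} E.

From HB Require Import structures.
From mathcomp Require Import all_boot all_order all_algebra.
From mathcomp Require Import all_classical all_reals all_analysis.
From mathcomp Require Import complex ring lra.
Import Order.TTheory GRing.Theory Num.Theory.
Import numFieldTopology.Exports numFieldNormedType.Exports.

(* Part (ii) is the continuity of Psi applied to the expansion
   f = sum_k <zeta_k, f>^* xi_k.  For part (i), if the span of the zeta_n were
   not dense for a topology of the dual pair, the Hahn-Banach separation
   theorem in the locally convex space D^x would give a continuous linear
   functional vanishing on every zeta_n but not on some Psi.  By compatibility
   with the duality this functional is Phi |-> <Phi, f> for some f in D, so
   <zeta_n, f> = 0 for all n, and (ii) gives <Psi, f> = 0, a contradiction.
   When D is reflexive, the strong dual topology is itself a topology of the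
   dual pair, the evaluations at points of D being continuous for it.
   Separation is derived from the dominated extension theorem (Zorn's lemma on
   graphs of dominated partial functionals) applied to the Minkowski gauge of a
   symmetric convex neighbourhood of 0, followed by complexification
   l |-> l(y) - i l(iy). *)

Set Implicit Arguments.
Unset Strict Implicit.
Local Open Scope ring_scope.
Local Open Scope classical_set_scope.

Definition rscale (R : realType) (T : lmodType R[i]) (r : R) (y : T) : T :=
  r%:C%C *: y.
Arguments rscale {R T}.

Section RealScaling.
Variables (R : realType) (T : lmodType R[i]).
Implicit Types (a b : R) (y z : T).

Lemma rscaleA a b y : rscale (a * b) y = rscale a (rscale b y).
Proof. by rewrite /rscale rmorphM scalerA. Qed.
Lemma rscaleDl a b y : rscale (a + b) y = rscale a y + rscale b y.
Proof. by rewrite /rscale rmorphD scalerDl. Qed.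
Lemma rscaleDr a y z : rscale a (y + z) = rscale a y + rscale a z.
Proof. by rewrite /rscale scalerDr. Qed.
Lemma rscale1 y : rscale 1 y = y.
Proof. by rewrite /rscale rmorph1 scale1r. Qed.
Lemma rscale0 y : rscale 0 y = 0.
Proof. by rewrite /rscale rmorph0 scale0r. Qed.
Lemma rscaler0 a : rscale a (0 : T) = 0.
Proof. by rewrite /rscale scaler0. Qed.
Lemma rscalerN a y : rscale a (- y) = - rscale a y.
Proof. by rewrite /rscale scalerN. Qed.
Lemma rscaleNr a y : rscale (- a) y = - rscale a y.
Proof. by rewrite /rscale rmorphN scaleNr. Qed.
Lemma rscaleK a y : a != 0 -> rscale a^-1 (rscale a y) = y.
Proof. by move=> a0; rewrite -rscaleA mulVf // rscale1. Qed.

End RealScaling.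

Definition real_linear (R : realType) (T : lmodType R[i]) (l : T -> R) :=
  forall r y z, l (rscale r y + z) = r * l y + l z.

Section RealLinear.
Variables (R : realType) (T : lmodType R[i]) (l : T -> R).
Hypothesis llin : real_linear l.

Lemma real_linear0 : l 0 = 0.
Proof.
have := llin 1 0 0; rewrite rscale1 addr0 mul1r => h.
by apply: (addrI (l 0)); rewrite addr0 -h.
Qed.

Lemma real_linearD y z : l (y + z) = l y + l z.
Proof. by rewrite -[y in LHS]rscale1 llin mul1r. Qed.

Lemma real_linearZ r y : l (rscale r y) = r * l y.
Proof. by rewrite -[rscale r y]addr0 llin real_linear0 addr0. Qed.

Lemma real_linearN y : l (- y) = - l y.
Proof. by have := real_linearZ (-1) y; rewrite rscaleNr rscale1 mulN1r. Qed.

End RealLinear.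

Section MinkowskiGauge.
Variables (R : realType) (T : lmodType R[i]) (U : set T).
Hypothesis U_convex : forall y z (t : R), 0 <= t <= 1 -> U y -> U z ->
  U (rscale t y + rscale (1 - t) z).
Hypothesis U0 : U 0.
Hypothesis U_absorbing : forall y, exists2 t : R, 0 < t & U (rscale t^-1 y).

Definition gauge_set y := [set t : R | 0 < t /\ U (rscale t^-1 y)].
Definition gauge y := inf (gauge_set y).

Lemma gauge_set_inf y : has_inf (gauge_set y).
Proof.
split; last by exists 0 => t [/ltW].
by have [t t0 Ut] := U_absorbing y; exists t.
Qed.

Lemma gauge_ge0 y : 0 <= gauge y.
Proof. by apply: lb_le_inf; [exact: (gauge_set_inf y).1 | move=> t [/ltW]]. Qed.

Lemma gauge_set_up y s t : gauge_set y s -> s <= t -> gauge_set y t.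
Proof.
move=> [s0 Us] st; have t0 : 0 < t by apply: lt_le_trans st.
split => //.
have -> : rscale t^-1 y = rscale (s / t) (rscale s^-1 y) + rscale (1 - s / t) 0.
  by rewrite rscaler0 addr0 -rscaleA mulrAC mulfV ?gt_eqF // mul1r.
by apply: U_convex => //; rewrite divr_ge0 ?(ltW s0) ?(ltW t0) //= ler_pdivrMr // mul1r.
Qed.

Lemma gauge_set_gt y t : gauge y < t -> gauge_set y t.
Proof.
move=> lt; have := @inf_adherent _ (gauge_set y) (t - gauge y).
rewrite subr_gt0 => /(_ lt (gauge_set_inf y)) [s Ss]; rewrite addrC subrK.
by move=> /ltW; apply: gauge_set_up.
Qed.

Lemma gauge_lt1 y : gauge y < 1 -> U y.
Proof. by move=> /gauge_set_gt [_]; rewrite invr1 rscale1. Qed.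

Lemma gauge_le1 y : U y -> gauge y <= 1.
Proof.
move=> Uy; apply: ge_inf; first exact: (gauge_set_inf y).2.
by split; rewrite ?invr1 ?rscale1.
Qed.

Lemma gaugeZ_le s y : 0 < s -> gauge (rscale s y) <= s * gauge y.
Proof.
move=> s0; rewrite -ler_pdivrMl //.
apply: lb_le_inf; first exact: (gauge_set_inf y).1.
move=> t [t0 Ut]; rewrite ler_pdivrMl //.
apply: ge_inf; first exact: (gauge_set_inf _).2.
split; first exact: mulr_gt0.
by rewrite invfM -rscaleA mulrAC mulVf ?gt_eqF // mul1r.
Qed.

Lemma gaugeZ_ge s y : 0 < s -> s * gauge y <= gauge (rscale s y).
Proof.
move=> s0; have := @gaugeZ_le s^-1 (rscale s y); rewrite invr_gt0 => /(_ s0).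
by rewrite rscaleK ?gt_eqF // -ler_pdivlMl.
Qed.

Lemma gaugeD y z : gauge (y + z) <= gauge y + gauge z.
Proof.
apply/ler_addgt0Pr => e e0.
have e20 : 0 < e / 2 by rewrite divr_gt0.
have [a0 Ua] : gauge_set y (gauge y + e / 2) by apply: gauge_set_gt; rewrite ltrDl.
have [b0 Ub] : gauge_set z (gauge z + e / 2) by apply: gauge_set_gt; rewrite ltrDl.
have -> : gauge y + gauge z + e = (gauge y + e / 2) + (gauge z + e / 2) by field.
move: a0 b0 Ua Ub; set a := gauge y + e / 2; set b := gauge z + e / 2.
move=> a0 b0 Ua Ub; have ab0 : 0 < a + b by apply: addr_gt0.
apply: ge_inf; first exact: (gauge_set_inf _).2.
split => //.
have -> : rscale (a + b)^-1 (y + z) =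
    rscale (a / (a + b)) (rscale a^-1 y) + rscale (1 - a / (a + b)) (rscale b^-1 z).
  rewrite -!rscaleA rscaleDr.
  by congr (rscale _ _ + rscale _ _); field; rewrite !gt_eqF.
apply: U_convex => //.
by rewrite divr_ge0 ?(ltW a0) ?(ltW ab0) //= ler_pdivrMr // mul1r lerDl ltW.
Qed.

Hypothesis U_sym : forall y, U y -> U (- y).

Lemma gaugeN y : gauge (- y) = gauge y.
Proof.
rewrite /gauge; congr inf; apply/funext => t; apply/propext.
split=> -[t0 Ut]; split; rewrite // ?rscalerN.
  by rewrite -[y]opprK rscalerN; apply: U_sym.
exact: U_sym.
Qed.

End MinkowskiGauge.

Section HahnBanach.
Variables (R : realType) (T : lmodType R[i]) (p : T -> R).
Hypothesis pD : forall y z, p (y + z) <= p y + p z.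
Hypothesis pZ : forall s y, 0 < s -> s * p y <= p (rscale s y).

(* Partial real-linear functionals dominated by p, encoded by their graphs. *)
Definition dominated_graph (G : set (T * R)) :=
  [/\ forall y a b, G (y, a) -> G (y, b) -> a = b,
      forall y z a b r, G (y, a) -> G (z, b) ->
        G (rscale r y + z, r * a + b)
    & forall y a, G (y, a) -> a <= p y].

Section DominatedGraph.
Variable G : set (T * R).
Hypothesis domG : dominated_graph G.

Lemma dominated_graph_fun {y a b} : G (y, a) -> G (y, b) -> a = b.
Proof. by case: domG => f _ _; apply: f. Qed.

Lemma dominated_graph_comb r {y z a b} : G (y, a) -> G (z, b) ->
  G (rscale r y + z, r * a + b).
Proof. by case: domG => _ f _; apply: f. Qed.

Lemma dominated_graph_le {y a} : G (y, a) -> a <= p y.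
Proof. by case: domG => _ _ f; apply: f. Qed.

Lemma dominated_graph0 {y a} : G (y, a) -> G (0, 0).
Proof.
move=> Ga; have := dominated_graph_comb (-1) Ga Ga.
by rewrite rscaleNr rscale1 addNr mulN1r addNr.
Qed.

Lemma dominated_graphZ r {y a} : G (y, a) -> G (rscale r y, r * a).
Proof.
by move=> Ga; have := dominated_graph_comb r Ga (dominated_graph0 Ga); rewrite !addr0.
Qed.

Lemma dominated_graphD {y z a b} : G (y, a) -> G (z, b) -> G (y + z, a + b).
Proof.
by move=> Ga Gb; have := dominated_graph_comb 1 Ga Gb; rewrite rscale1 mul1r.
Qed.

Lemma dominated_graphB {y z a b} : G (y, a) -> G (z, b) -> G (y - z, a - b).
Proof.
move=> Ga /(dominated_graphZ (-1)); rewrite rscaleNr rscale1 mulN1r.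
exact: dominated_graphD.
Qed.

Lemma extension_value y : G (0, 0) -> exists c : R,
  (forall m a, G (m, a) -> a - p (m - y) <= c) /\
  (forall m a, G (m, a) -> c <= p (m + y) - a).
Proof.
move=> G00.
pose S := [set u | exists m a, G (m, a) /\ u = a - p (m - y)].
have S_ub m b : G (m, b) -> ubound S (p (m + y) - b).
  move=> Gb _ [m' [a [Ga ->]]]; rewrite lerBrDr addrAC lerBlDr.
  apply: le_trans (pD _ _); rewrite addrCA addrK.
  exact/dominated_graph_le/dominated_graphD.
have S_sup : has_sup S.
  by split; [exists (0 - p (0 - y)), 0, 0 | exists (p (0 + y) - 0); apply: S_ub].
exists (sup S); split => [m a Ga|m b Gb].
  by apply: sup_upper_bound => //; exists m, a.
by apply: ge_sup; [exact: S_sup.1 | exact: S_ub].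
Qed.

Lemma dominated_graph_extend y : G (0, 0) -> (forall a, ~ G (y, a)) ->
  exists2 B, dominated_graph B & G `<=` B /\ exists b, B (y, b).
Proof.
move=> G00 Gy; have [c [c_ge c_le]] := extension_value y G00.
exists [set q | exists m a s, G (m, a) /\ q = (m + rscale s y, a + s * c)].
  split.
  - move=> q a b [m [a1 [s [Gm [-> ->]]]]] [m' [a1' [s' [Gm' []]]]] e ->.
    move: e; have [<- /addIr em|ss e] := eqVneq s s'.
      by rewrite em in Gm; rewrite (dominated_graph_fun Gm Gm').
    exfalso; apply: (Gy ((s - s')^-1 * (a1' - a1))).
    have -> : y = rscale (s - s')^-1 (m' - m).
      rewrite -(@rscaleK _ _ (s - s') y) ?subr_eq0 //; congr rscale.
      rewrite rscaleDl rscaleNr; apply: (addrI m).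
      by rewrite addrA e addrK addrCA subrr addr0.
    exact/dominated_graphZ/dominated_graphB.
  - move=> y1 y2 b1 b2 r [m [a [s [Gm [-> ->]]]]] [m' [a' [s' [Gm' [-> ->]]]]].
    exists (rscale r m + m'), (r * a + a'), (r * s + s'); split.
      exact: dominated_graph_comb.
    by rewrite rscaleDr -rscaleA rscaleDl addrACA; congr pair; ring.
  - move=> q b [m [a [s [Gm [-> ->]]]]].
    have [s0|s0|->] := ltgtP s 0; last first.
    + by rewrite rscale0 mul0r !addr0; apply: dominated_graph_le.
    + have := c_le _ _ (dominated_graphZ s^-1 Gm).
      rewrite -(ler_pM2l s0) mulrBr mulrA mulfV ?gt_eqF // mul1r => h.
      rewrite -lerBrDl; apply: (le_trans h); rewrite lerD2r.
      have := @pZ s (rscale s^-1 m + y) s0.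
      by rewrite rscaleDr -rscaleA mulfV ?gt_eqF // rscale1.
    + set u := - s; have u0 : 0 < u by rewrite oppr_gt0.
      have := c_ge _ _ (dominated_graphZ u^-1 Gm).
      rewrite -(ler_pM2l u0) mulrBr mulrA mulfV ?gt_eqF // mul1r => h.
      have -> : s = - u by rewrite opprK.
      rewrite mulNr rscaleNr; apply: le_trans (_ : u * p (rscale u^-1 m - y) <= _).
        by move: h; rewrite !lerBlDr addrC.
      have := @pZ u (rscale u^-1 m - y) u0.
      by rewrite rscaleDr -rscaleA mulfV ?gt_eqF // rscale1 rscalerN.
split; last by exists c, 0, 0, 1; rewrite add0r rscale1 mul1r add0r.
by move=> [m a] Gm; exists m, a, 0; rewrite rscale0 mul0r !addr0.
Qed.

End DominatedGraph.

Lemma dominated_graph_bigcup (F : set (set (T * R))) :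
  F `<=` dominated_graph -> total_on F subset ->
  dominated_graph (\bigcup_(G in F) G).
Proof.
move=> Fdom Ftot.
have common q q' : (\bigcup_(G in F) G) q -> (\bigcup_(G in F) G) q' ->
    exists2 G, F G & G q /\ G q'.
  move=> [G1 FG1 G1q] [G2 FG2 G2q'].
  by case: (Ftot _ _ FG1 FG2) => sub; [exists G2 => //; split => //; apply: sub
                                      | exists G1 => //; split => //; apply: sub].
split.
- move=> y a b Ga Gb; have [G FG [Ga' Gb']] := common _ _ Ga Gb.
  exact: (dominated_graph_fun (Fdom _ FG) Ga' Gb').
- move=> y z a b r Ga Gb; have [G FG [Ga' Gb']] := common _ _ Ga Gb.
  by exists G => //; exact: (dominated_graph_comb (Fdom _ FG) r Ga' Gb').
- by move=> y a [G FG Ga]; exact: (dominated_graph_le (Fdom _ FG) Ga).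
Qed.

Theorem hahn_banach (G0 : set (T * R)) : dominated_graph G0 -> G0 !=set0 ->
  exists l : T -> R, [/\ real_linear l, forall y, l y <= p y
    & forall y a, G0 (y, a) -> l y = a].
Proof.
move=> domG0 [[y0 a0] G0y0].
(* The empty graph is admitted so that the union of the empty chain qualifies. *)
pose P G := dominated_graph G /\ (G0 `<=` G \/ G = set0).
have [A [[domA G0A] maxA]] : exists A, P A /\ forall B, A `<` B -> ~ P B.
  apply: Zorn_bigcup => F FP Ftot.
  split; first by apply: dominated_graph_bigcup => // G /FP[].
  have [[G FG G0G]|noG] := pselect (exists2 G, F G & G0 `<=` G).
    by left => q /G0G Gq; exists G.
  right; apply/seteqP; split => // q [G FG Gq].
  by case: (FP _ FG) => _ [G0G|G_empty]; [case: noG; exists G | rewrite G_empty in Gq].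
have {}G0A : G0 `<=` A.
  case: G0A => // A0; case: (maxA G0); last by split => //; left.
  by rewrite A0; split => // /(_ (y0, a0) G0y0).
have A00 : A (0, 0) := dominated_graph0 domA (G0A _ G0y0).
have Atot y : exists a, A (y, a).
  apply/not_existsP => Ay.
  have [B domB [AB [b By]]] := dominated_graph_extend domA A00 Ay.
  apply: (maxA B); last by split => //; left => q /G0A /AB.
  by split => // /(_ (y, b) By); apply: Ay.
have [l Al] := choice Atot.
exists l; split.
- by move=> r y z; apply: (dominated_graph_fun domA (Al _)); apply: dominated_graph_comb.
- by move=> y; apply: (dominated_graph_le domA (Al y)).
- by move=> y a /G0A; apply: (dominated_graph_fun domA (Al y)).
Qed.

End HahnBanach.

Local Open Scope complex_scope.

Lemma complex_gt0 (R : realType) (e : R[i]) : 0 < e -> exists2 r : R, 0 < r & e = r%:C.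
Proof. by case: e => a b; rewrite ltcE /= => /andP[/eqP -> a0]; exists a. Qed.

Lemma normcR (R : realType) (x : R) : `|x%:C| = `|x|%:C.
Proof. by rewrite normc_def /= expr0n /= addr0 sqrtr_sqr. Qed.

Lemma normc_iR (R : realType) (r : R) : `|'i * r%:C| = `|r|%:C.
Proof.
rewrite normc_def /=.
have -> : (0 * r - 1 * 0) ^+ 2 + (0 * 0 + 1 * r) ^+ 2 = r ^+ 2 :> R by ring.
by rewrite sqrtr_sqr.
Qed.

Lemma mulii (R : realType) : 'i * 'i = -1 :> R[i].
Proof. by apply/eqP; rewrite eq_complex /=; apply/andP; split; apply/eqP; ring. Qed.

Lemma i_neq0 (R : realType) : 'i != 0 :> R[i].
Proof. by rewrite eq_complex /= oner_eq0 andbF. Qed.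

Section ConvexNbhs.
Variables (R : realType) (T : tvsType R[i]).

Lemma convex_set_rscale (B : set T) : convex_set B ->
  forall y z (t : R), 0 <= t <= 1 -> B y -> B z -> B (rscale t y + rscale (1 - t) z).
Proof.
move=> cB y z t /andP[t0 t1] By Bz.
have t0' : 0 <= t%:C by rewrite lecR.
have t1' : t%:C <= 1 by rewrite -(rmorph1 (real_complex R)) lecR.
have := cB y z (Itv01 t0' t1') (mem_set By) (mem_set Bz).
by rewrite inE /= /rscale rmorphB rmorph1.
Qed.

Lemma nbhs_convex_sub (x : T) (A : set T) : nbhs x A ->
  exists2 B : set T, convex_set B & nbhs x B /\ B `<=` A.
Proof.
move=> Ax; have [Bs cBs [oBs bBs]] := @locally_convex _ T.
have [B [BB Bx] BA] := bBs x A Ax.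
exists B; first by apply: cBs; rewrite inE.
by split => //; apply: open_nbhs_nbhs; split => //; apply: oBs.
Qed.

Lemma nbhs0_absorbing (U : set T) : nbhs 0 U ->
  forall y, exists2 t : R, 0 < t & U (rscale t^-1 y).
Proof.
move=> U0 y; have /= := @scale_continuous _ T (0, y) U.
rewrite scale0r => /(_ U0) [] /= N [N1 N2] NU.
have [e e0 He] := (@nbhs_norm0P _ (R[i]^o) _).1 N1.
have [er er0 ee] := complex_gt0 e0; rewrite ee in He.
exists (2 / er); first by rewrite divr_gt0.
apply: (NU ((2 / er)^-1%:C, y)); split => //=; last exact: nbhs_singleton.
apply: He; rewrite /= normcR ltcR invf_div gtr0_norm ?divr_gt0 //.
by rewrite ltr_pdivrMr // ltr_pMr // ltr1n.
Qed.

Lemma near0_gaugeZ_le (U : set T) (a : R[i]) (e : R) : nbhs 0 U -> a != 0 -> 0 < e ->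
  \forall w \near 0, gauge U (a *: w) <= e.
Proof.
move=> U0 a0 e0; have Uabs := nbhs0_absorbing U0.
have ae0 : a^-1 * e%:C != 0.
  by rewrite mulf_neq0 ?invr_eq0 // (fmorph_eq0 (real_complex R)) gt_eqF.
apply: filterS (nbhs0Z ae0 U0) => _ [u Uu <-].
rewrite scalerA mulrA mulfV // mul1r -/(rscale e u).
apply: le_trans (gaugeZ_le Uabs u e0) _.
by apply: ler_piMr; [exact: ltW | exact: (gauge_le1 Uabs Uu)].
Qed.

End ConvexNbhs.

Section SymmetricCore.
Variables (R : realType) (T : tvsType R[i]) (B : set T) (x : T).

Definition sym_core := [set y | B (x + y) /\ B (x - y)].

Lemma sym_core_convex : convex_set B -> forall y z (t : R), 0 <= t <= 1 ->
  sym_core y -> sym_core z -> sym_core (rscale t y + rscale (1 - t) z).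
Proof.
move=> cB y z t t01 [By1 By2] [Bz1 Bz2].
have shift (a u v : T) : a + (rscale t u + rscale (1 - t) v) =
    rscale t (a + u) + rscale (1 - t) (a + v).
  by rewrite !rscaleDr addrACA -rscaleDl [t + _]addrC subrK rscale1.
split; first by rewrite shift; apply: convex_set_rscale.
by rewrite opprD -!rscalerN shift; apply: convex_set_rscale.
Qed.

Lemma sym_core0 : B x -> sym_core 0.
Proof. by split; rewrite ?addr0 ?subr0. Qed.

Lemma sym_coreN y : sym_core y -> sym_core (- y).
Proof. by move=> [h1 h2]; split; rewrite ?opprK. Qed.

Lemma sym_core_nbhs0 : nbhs x B -> nbhs 0 sym_core.
Proof.
move=> Bx.
have S1 : nbhs 0 [set y | B (x + y)].
  have := nbhsB (- x) Bx; rewrite addNr.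
  by apply: filterS => _ [b Bb <-] /=; rewrite addNKr.
have S2 : nbhs 0 [set y | B (x - y)].
  by apply: filterS (nbhs0N S1) => _ [b Bb <-] /=; rewrite opprK.
exact: filterI.
Qed.

End SymmetricCore.

Lemma real_separation (R : realType) (T : tvsType R[i]) (U V : set T) (x : T) :
  (forall y z (t : R), 0 <= t <= 1 -> U y -> U z -> U (rscale t y + rscale (1 - t) z)) ->
  U 0 -> (forall y, U y -> U (- y)) -> nbhs 0 U ->
  (forall (a : R[i]) v w, V v -> V w -> V (a *: v + w)) -> V 0 ->
  (forall v, V v -> ~ U (x + v)) ->
  exists l : T -> R, [/\ real_linear l, forall y, `|l y| <= gauge U y,
    forall v, V v -> l v = 0 & l x = 1].
Proof.
move=> Ucvx U0 Usym Unbhs Vlin V0 xVU; have Uabs := nbhs0_absorbing Unbhs.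
have VZ r v : V v -> V (rscale r v).
  by move=> Vv; have := Vlin r%:C v 0 Vv V0; rewrite addr0.
have VB v w : V v -> V w -> V (v - w).
  by move=> Vv Vw; have := Vlin (-1) w v Vw Vv; rewrite scaleN1r addrC.
have gauge_ge1 v : V v -> 1 <= gauge U (x + v).
  by move=> Vv; rewrite leNgt; apply/negP => /(gauge_lt1 Ucvx U0 Uabs); apply: xVU.
pose G0 := [set q : T * R | exists t v, V v /\ q = (rscale t x + v, t)].
have domG0 : dominated_graph (gauge U) G0.
  split.
  - move=> y a b [t [v [Vv [-> ->]]]] [t' [v' [Vv' [e ->]]]].
    apply/eqP; apply: contraT => tt'; have Vx : V x.
      rewrite -(@rscaleK _ _ (t - t') x) ?subr_eq0 //; apply: VZ.
      have e' : rscale t x = rscale t' x + v' - v by rewrite -e addrK.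
      by rewrite rscaleDl rscaleNr e' addrAC (addrC (rscale t' x)) addrK; apply: VB.
    by have := xVU (0 - x) (VB _ _ V0 Vx); rewrite addrC subrK; move/(_ U0).
  - move=> y z a b r [t [v [Vv [-> ->]]]] [t' [v' [Vv' [-> ->]]]].
    exists (r * t + t'), (rscale r v + v'); split.
      by have := Vlin 1 _ _ (VZ r v Vv) Vv'; rewrite scale1r.
    by rewrite rscaleDr -rscaleA rscaleDl addrACA.
  - move=> y a [t [v [Vv [-> ->]]]].
    have [t0|t0] := leP t 0; first exact: le_trans t0 (gauge_ge0 Uabs _).
    have -> : rscale t x + v = rscale t (x + rscale t^-1 v).
      by rewrite rscaleDr -rscaleA mulfV ?gt_eqF // rscale1.
    apply: le_trans (gaugeZ_ge Uabs _ t0).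
    by apply: ler_peMr; [exact: ltW | exact/gauge_ge1/VZ].
have G0x : G0 (x, 1) by exists 1, 0; rewrite rscale1 addr0.
have [l [llin ldom lG0]] :=
  hahn_banach (gaugeD Ucvx U0 Uabs) (gaugeZ_ge Uabs) domG0 (ex_intro _ _ G0x).
exists l; split => //.
- move=> y; rewrite ler_norml ldom andbT lerNl -(real_linearN llin).
  by rewrite -(gaugeN Usym y); apply: ldom.
- by move=> v Vv; apply: lG0; exists 0, v; rewrite rscale0 add0r.
- exact: lG0.
Qed.

Lemma linear_fun_continuous (R : realType) (T : tvsType R[i]) (L : T -> R[i]) :
  linear_fun L -> (forall e : R, 0 < e -> \forall w \near 0, `|L w| < e%:C) ->
  continuous L.
Proof.
move=> Llin L0 y; apply/(@cvgrPdist_lt _ (R[i]^o)) => e e0.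
have [er er0 ->] := complex_gt0 e0.
apply: filterS (nbhsT y (L0 er er0)) => _ [w Lw <-] /=.
have := Llin 1 y w; rewrite scale1r mul1r => ->.
by rewrite opprD addrA subrr add0r normrN.
Qed.

Section Complexify.
Variables (R : realType) (T : tvsType R[i]) (l : T -> R).

Definition complexify y := (l y)%:C - 'i * (l ('i *: y))%:C.

Hypothesis llin : real_linear l.

Lemma complexify_linear : linear_fun complexify.
Proof.
move=> [al be] y z.
have iZ (r : R) (w : T) : 'i *: rscale r w = rscale r ('i *: w).
  by rewrite /rscale !scalerA mulrC.
have iiZ (w : T) : 'i *: ('i *: w) = - w by rewrite scalerA mulii scaleN1r.
have scaleE (w : T) : (al +i* be) *: w = rscale al w + rscale be ('i *: w).
  rewrite /rscale scalerA -scalerDl; congr (_ *: _).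
  by apply/eqP; rewrite eq_complex /=; apply/andP; split; apply/eqP; ring.
rewrite /complexify !scaleE !scalerDr !iZ !iiZ !(real_linearD llin).
rewrite !(real_linearZ llin) !(real_linearN llin).
move: (l y) (l ('i *: y)) (l z) (l ('i *: z)) => a1 a2 a3 a4.
by apply/eqP; rewrite eq_complex /=; apply/andP; split; apply/eqP; ring.
Qed.

Lemma complexify_continuous (U : set T) : nbhs 0 U ->
  (forall y, `|l y| <= gauge U y) -> continuous complexify.
Proof.
move=> U0 lU; apply: linear_fun_continuous complexify_linear _ => e e0.
have e30 : 0 < e / 3 by rewrite divr_gt0.
have small (a : R[i]) : a != 0 -> \forall w \near (0 : T), `|l (a *: w)| <= e / 3.
  by move=> a0; apply: filterS (near0_gaugeZ_le U0 a0 e30) => w; apply/le_trans/lU.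
apply: filterS (filterI (small 1 (oner_neq0 _)) (small 'i (i_neq0 R))).
move=> w []; rewrite scale1r => lw liw.
apply: le_lt_trans (ler_normB _ _) _.
by rewrite normcR normc_iR -rmorphD ltcR; lra.
Qed.

End Complexify.

Theorem separation (R : realType) (T : tvsType R[i]) (V A : set T) (x : T) :
  (forall (a : R[i]) v w, V v -> V w -> V (a *: v + w)) -> V 0 ->
  nbhs x A -> (forall v, V v -> ~ A v) ->
  exists L : T -> R[i],
    [/\ linear_fun L, continuous L, forall v, V v -> L v = 0 & L x != 0].
Proof.
move=> Vlin V0 Ax VA.
have [B cB [Bx BA]] := nbhs_convex_sub Ax.
have xVU v : V v -> ~ sym_core B x (x + v).
  move=> Vv [_]; rewrite opprD addrA subrr add0r => /BA; apply: VA.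
  by have := Vlin (-1) v 0 Vv V0; rewrite scaleN1r addr0.
have [l [llin lU lV lx]] := real_separation (sym_core_convex cB)
  (sym_core0 (nbhs_singleton Bx)) (@sym_coreN _ _ B x) (sym_core_nbhs0 Bx) Vlin V0 xVU.
exists (complexify l); split.
- exact: complexify_linear.
- exact: complexify_continuous (sym_core_nbhs0 Bx) lU.
- move=> v Vv; rewrite /complexify !lV ?rmorph0 ?mulr0 ?subr0 //.
  by have := Vlin 'i v 0 Vv V0; rewrite addr0.
- rewrite /complexify lx; apply/eqP => /(congr1 (@complex.Re R)) /=.
  by rewrite mul0r mul1r subr0 subr0 => /eqP; rewrite oner_eq0.
Qed.

Local Close Scope complex_scope.

Section LinSpan.
Variables (R : realType) (E : tvsType R[i]) (zeta : nat -> E -> R[i]).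

Lemma lin_span0 : lin_span zeta (fun _ => 0).
Proof. by exists 0%N, (fun _ => 0); apply/funext => f; rewrite big_ord0. Qed.

Lemma lin_span_gen k : lin_span zeta (zeta k).
Proof.
exists k.+1, (fun j => if j == k then 1 else 0); apply/funext => f.
rewrite big_ord_recr /= eqxx mul1r big1 ?add0r // => j _.
by rewrite (ltn_eqF (ltn_ord j)) mul0r.
Qed.

Lemma lin_span_comb (a : R[i]) u w : lin_span zeta u -> lin_span zeta w ->
  lin_span zeta (fun f => a * u f + w f).
Proof.
move=> [n [c ->]] [n' [c' ->]]; set N := maxn n n'.
have widen m (d : nat -> R[i]) f : (m <= N)%N ->
    \sum_(k < m) d k * zeta k f = \sum_(k < N) (if (k < m)%N then d k else 0) * zeta k f.
  move=> mN; rewrite (big_ord_widen N (fun k => d k * zeta k f)) // big_mkcond /=.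
  by apply: eq_bigr => k _; case: ifP; rewrite ?mul0r.
exists N, (fun k =>
  a * (if (k < n)%N then c k else 0) + (if (k < n')%N then c' k else 0)).
apply/funext => f; rewrite (widen n) ?leq_maxl // (widen n') ?leq_maxr //.
by rewrite big_distrr -big_split /=; apply: eq_bigr => k _; rewrite mulrA mulrDl.
Qed.

End LinSpan.

Section CoefficientFunctionals.
Variables (R : realType) (E : tvsType R[i]) (xi : nat -> E) (zeta : nat -> E -> R[i]).

Lemma conj_dual_expansion :
  (forall f : E, \sum_(k < n) (zeta k f)^* *: xi k @[n --> \oo] --> f) ->
  forall Psi : E -> R[i], conj_dual E Psi -> forall f : E,
    \sum_(k < n) Psi (xi k) * zeta k f @[n --> \oo] --> Psi f.
Proof.
move=> zexp Psi [Plin Pcont] f.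
have P0 : Psi 0 = 0.
  have := Plin 1 0 0; rewrite scale1r addr0 conjC1 mul1r => h.
  by apply: (addrI (Psi 0)); rewrite addr0 -h.
have Psum n : Psi (\sum_(k < n) (zeta k f)^* *: xi k) =
    \sum_(k < n) Psi (xi k) * zeta k f.
  elim: n => [|n IH]; first by rewrite !big_ord0.
  by rewrite !big_ord_recr /= addrC Plin IH conjCK addrC mulrC.
under eq_fun do rewrite -Psum.
exact: cvg_comp (zexp f) (Pcont f).
Qed.

Lemma lin_span_dense (T : tvsType R[i]) (iota : T -> E -> R[i]) :
  coef_functionals xi zeta -> dual_pair_topology iota ->
  closure (iota @^-1` lin_span zeta) = setT.
Proof.
move=> [zdual zexp] [[_ ilin irange] dual_eval].
set V := iota @^-1` lin_span zeta.
have iota0 : iota 0 = fun _ => 0.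
  apply/funext => f; have := congr1 (fun g => g f) (ilin 1 0 0).
  rewrite /= scale1r addr0 mul1r => h.
  by apply: (addrI (iota 0 f)); rewrite addr0 -h.
have Vlin (a : R[i]) v w : V v -> V w -> V (a *: v + w).
  by move=> Vv Vw; rewrite /V /preimage /= ilin; apply: lin_span_comb.
have V0 : V 0 by rewrite /V /preimage /= iota0; apply: lin_span0.
apply/seteqP; split => // y _ A Ay; apply: contrapT => noVA.
have VA v : V v -> ~ A v by move=> Vv Av; apply: noVA; exists v.
have [L [Llin Lcont LV Ly]] := separation Vlin V0 Ay VA.
have : [set L : T -> R[i] | linear_fun L /\ continuous L] L by [].
rewrite dual_eval => -[f Lf].
have zf k : zeta k f = 0.
  have [vk _ vkE] : range iota (zeta k) by rewrite irange; apply: zdual.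
  by have := LV vk; rewrite /V /preimage /= Lf vkE; apply; apply: lin_span_gen.
have yf : iota y f = 0.
  have y_dual : conj_dual E (iota y) by rewrite -irange; exists y.
  apply: (@cvg_unique R[i]^o (@norm_hausdorff _ R[i]^o) _ _ _ _
    (conj_dual_expansion zexp y_dual (f := f))).
  suff -> : (fun n => \sum_(k < n) iota y (xi k) * zeta k f) = fun=> 0.
    exact: cvg_cst.
  by apply/funext => n; rewrite big1 // => k _; rewrite zf mulr0.
by move: Ly; rewrite Lf yf eqxx.
Qed.

End CoefficientFunctionals.

Section StrongDual.
Variables (R : realType) (E T : tvsType R[i]) (iota : T -> E -> R[i]).

Lemma tvs_bounded_set1 (f : E) : tvs_bounded [set f].
Proof.
move=> U U0; have /= := @scale_continuous _ E (0, f) U.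
rewrite scale0r => /(_ U0) [] /= N [N1 N2] NU.
have [e e0 He] := (@nbhs_norm0P _ (R[i]^o) _).1 N1.
exists (2 / e); split; first by rewrite divr_gt0.
move=> mu le_mu _ ->.
have mu_gt0 : 0 < `|mu| by apply: lt_le_trans le_mu; rewrite divr_gt0.
have mu0 : mu != 0 by rewrite -normr_gt0.
exists (mu^-1 *: f); last by rewrite scalerA mulfV // scale1r.
apply: (NU (mu^-1, f)); split => //=; last exact: nbhs_singleton.
apply: He; rewrite /= normfV.
have mue : `|mu|^-1 <= e / 2 by rewrite -invf_div lef_pV2 // posrE divr_gt0.
by apply: le_lt_trans mue _; rewrite ltr_pdivrMr // ltr_pMr // ltr1n.
Qed.

Hypothesis iota_strong : strong_dual iota.

Lemma strong_dual_eval_continuous (f : E) : continuous (fun x : T => iota x f).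
Proof.
have [_ nbhsE] := iota_strong.
move=> x; apply/(@cvgrPdist_lt _ R[i]^o) => eps eps0.
apply/(nbhsE x _).2; exists [set f]; split; first exact: tvs_bounded_set1.
by exists eps => // z /(_ f erefl); rewrite distrC.
Qed.

Lemma strong_dual_pair_topology : reflexive_via iota -> dual_pair_topology iota.
Proof.
move=> [_ eval_surj _]; have [dm _] := iota_strong; split => //.
have [_ ilin _] := dm; apply/seteqP; split.
- move=> L [Llin Lcont]; have [f Lf] := eval_surj L Llin Lcont.
  by exists f; apply/funext.
- move=> _ [f ->]; split; last exact: strong_dual_eval_continuous.
  by move=> a x y; rewrite ilin.
Qed.

End StrongDual.

Theorem proposition2p8 (R : realType) (E : tvsType R[i])
    (H : completeNormedModType R[i]) (ip : H -> H -> R[i]) (j : E -> H)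
    (xi : nat -> E) (zeta : nat -> E -> R[i]) :
  rigged_hilbert ip j -> schauder_basis xi -> coef_functionals xi zeta ->
  [/\ (forall (T : tvsType R[i]) (iota : T -> E -> R[i]),
         dual_pair_topology iota ->
         closure (iota @^-1` lin_span zeta) = setT),
      (reflexive_space E ->
       forall (T : tvsType R[i]) (iota : T -> E -> R[i]),
         strong_dual iota ->
         closure (iota @^-1` lin_span zeta) = setT)
    & forall Psi : E -> R[i], conj_dual E Psi -> forall f : E,
        \sum_(k < n) Psi (xi k) * zeta k f @[n --> \oo] --> Psi f].
Proof.
move=> _ _ zeta_coef; split.
- by move=> T iota; apply: lin_span_dense zeta_coef.
- move=> refl T iota iota_strong; apply: lin_span_dense zeta_coef _.
  exact: strong_dual_pair_topology iota_strong (refl T iota iota_strong).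
- exact: conj_dual_expansion zeta_coef.2.
Qed.
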